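(* Let $G$ be a canonically prime bichain graph, and let $\phi$ be an embedding of $G$ as an induced subgraph into a $Z$-grid $Z$ with vertex set $\{z_{i,j}:1\le i\le a,\ 1\le j\le b\}$ (for some $a,b\ge1$), where for $i<i'$, $z_{i,j}z_{i',j'}$ is an edge iff (1) $i$ odd, $i'=i+1$, $j>j'$; or (2) $i$ even, $i'=i+1$, $j\le j'$; or (3) $i$ even, $i'$ odd, $i'\ge i+3$. Then the set of columns $\{i : z_{i,j}\in\phi(V(G))\text{ for some }j\}$ is a set of consecutive integers.
   Context: A bichain graph is a bipartite graph admitting a bipartition in which each of the two parts can be divided into at most two chains, a chain being a set of vertices whose neighbourhoods are linearly ordered by inclusion. For bipartite graphs $G_1=(X_1,Y_1,E_1)$, $G_2=(X_2,Y_2,E_2)$ on disjoint vertex sets (given with bipartitions) define the disjoint union $G_1\oplus G_2=(X_1\cup X_2,Y_1\cup Y_2,E_1\cup E_2)$, the join $G_1\otimes G_2=(X_1\cup X_2,Y_1\cup Y_2,E_1\cup E_2\cup(X_1\times Y_2)\cup(X_2\times Y_1))$, and the skew join $G_1\oslash G_2=(X_1\cup X_2,Y_1\cup Y_2,E_1\cup E_2\cup(X_1\times Y_2))$. A bipartite graph is canonically prime if it cannot be written in the form $G_1\oplus G_2$, $G_1\otimes G_2$ or $G_1\oslash G_2$ with $G_1,G_2$ nonempty. In the grid, $i$ is the column index. *)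

From mathcomp Require Import all_boot.
Set Implicit Arguments. Unset Strict Implicit. Unset Printing Implicit Defensive.

Definition bipartite_wrt (V : finType) (e : rel V) (X : {set V}) : Prop :=
  symmetric e /\ (forall u v, e u v -> (u \in X) != (v \in X)).

Definition nbhd (V : finType) (e : rel V) (v : V) : {set V} := [set w | e v w].

Definition is_chain (V : finType) (e : rel V) (S : {set V}) : Prop :=
  forall u v, u \in S -> v \in S ->
    (nbhd e u \subset nbhd e v) \/ (nbhd e v \subset nbhd e u).

Definition bichain (V : finType) (e : rel V) (X : {set V}) : Prop :=
  bipartite_wrt e X /\
  (exists X1 X2 : {set V}, X = X1 :|: X2 /\ is_chain e X1 /\ is_chain e X2) /\
  (exists Y1 Y2 : {set V}, ~: X = Y1 :|: Y2 /\ is_chain e Y1 /\ is_chain e Y2).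

(* G = G1 (+) G2 where G1 is induced on A, G2 on B = ~: A *)
Definition is_disjoint_union (V : finType) (e : rel V) (X A : {set V}) : Prop :=
  forall u v, u \in A -> v \notin A -> ~~ e u v.

(* G = G1 (x) G2 : X1 complete to Y2 and X2 complete to Y1 *)
Definition is_join (V : finType) (e : rel V) (X A : {set V}) : Prop :=
  (forall u v, u \in A -> v \notin A -> u \in X -> v \notin X -> e u v) /\
  (forall u v, u \notin A -> v \in A -> u \in X -> v \notin X -> e u v).

(* G = G1 (/) G2 : X1 complete to Y2, no edges between X2 and Y1 *)
Definition is_skew_join (V : finType) (e : rel V) (X A : {set V}) : Prop :=
  (forall u v, u \in A -> v \notin A -> u \in X -> v \notin X -> e u v) /\
  (forall u v, u \notin A -> v \in A -> u \in X -> v \notin X -> ~~ e u v).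

Definition canonically_prime (V : finType) (e : rel V) (X : {set V}) : Prop :=
  forall A : {set V}, A != set0 -> ~: A != set0 ->
    ~ is_disjoint_union e X A /\ ~ is_join e X A /\ ~ is_skew_join e X A.

(* Z-grid adjacency on vertices z_{i,j} = (i, j) (1-based), case i < i' *)
Definition zgrid_lt (p q : nat * nat) : bool :=
  let: (i, j) := p in let: (i', j') := q in
  (i < i') &&
  [|| [&& odd i, i' == i.+1 & j' < j],
      [&& ~~ odd i, i' == i.+1 & j <= j']
    | [&& ~~ odd i, odd i' & i + 3 <= i']].

Definition zgrid_adj (p q : nat * nat) : bool := zgrid_lt p q || zgrid_lt q p.

Definition in_zgrid (a b : nat) (p : nat * nat) : bool :=
  (1 <= p.1 <= a) && (1 <= p.2 <= b).

Definition zgrid_embedding (V : finType) (e : rel V) (a b : nat)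
  (phi : V -> nat * nat) : Prop :=
  injective phi /\ (forall v, in_zgrid a b (phi v)) /\
  (forall u v, e u v = zgrid_adj (phi u) (phi v)).

Definition used_column (V : finType) (phi : V -> nat * nat) (i : nat) : Prop :=
  exists v, (phi v).1 = i.

(* Grid edges change the parity of the column, so the parity of the column is a
   proper 2-colouring of G; since G is prime, its bipartition must be exactly
   {even columns, odd columns} (otherwise G splits as a disjoint union).  If a
   column j between two used columns were empty, the only edges between the
   vertices left of j and those right of j would go from the even columns on
   the left to the odd columns on the right, and all of them are present: this
   is a skew join, contradicting primality. *)
From mathcomp Require Import all_boot.
From mathcomp Require Import zify.

Set Implicit Arguments.
Unset Strict Implicit.
Unset Printing Implicit Defensive.

Lemma zgrid_adjC : symmetric zgrid_adj.
Proof. by move=> p q; rewrite /zgrid_adj orbC. Qed.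

Lemma zgrid_lt_odd (p q : nat * nat) :
  zgrid_lt p q -> odd p.1 != odd q.1.
Proof.
case: p q => [i x] [k y] /= /andP[_].
case/or3P=> /and3P[oi hk _]; last by rewrite (negbTE oi) hk.
  by rewrite (eqP hk) /= oi.
by rewrite (eqP hk) /= (negbTE oi).
Qed.

Lemma zgrid_adj_odd (p q : nat * nat) :
  zgrid_adj p q -> odd p.1 != odd q.1.
Proof. by case/orP=> /zgrid_lt_odd //; rewrite eq_sym. Qed.

Lemma zgrid_adj_across (p q : nat * nat) (j : nat) :
  p.1 < j < q.1 -> zgrid_adj p q = ~~ odd p.1 && odd q.1.
Proof.
case: p q => [i x] [k y] /= /andP[hi hk]; rewrite /zgrid_adj /zgrid_lt.
have -> : (k < i) = false by lia.
have -> : (i < k) = true by lia.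
have -> : (k == i.+1) = false by apply/eqP; lia.
rewrite !andbF /= orbF.
case oi: (odd i); case ok: (odd k) => //=.
case: (leqP (i + 3) k) => // h.
have hk2 : k = i.+2 by lia.
by move: ok; rewrite hk2 /= oi.
Qed.

Lemma canonically_prime_part_colouring (V : finType) (e : rel V) (X : {set V})
    (c : V -> bool) :
  bipartite_wrt e X -> canonically_prime e X ->
  (forall u v, e u v -> c u != c v) ->
  (forall v, (v \in X) = c v) \/ (forall v, (v \in X) = ~~ c v).
Proof.
move=> [_ eX] prime ec.
set A := [set v | (v \in X) == c v].
have : is_disjoint_union e X A.
  move=> u v; rewrite !inE => Au Av; apply/negP => euv.
  move: Au Av (eX _ _ euv) (ec _ _ euv).
  by case: (u \in X); case: (v \in X); case: (c u); case: (c v).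
case: (eqVneq A set0) => [A0 _|An0].
  by right=> v; move: (in_set0 v); rewrite -A0 inE; case: (v \in X); case: (c v).
case: (eqVneq (~: A) set0) => [A1 _|A1]; last by case: (prime A An0 A1).
by left=> v; move: (in_set0 v); rewrite -A1 !inE; case: (v \in X); case: (c v).
Qed.

Section EmptyColumn.

Variables (V : finType) (e : rel V) (X : {set V}) (phi : V -> nat * nat).
Hypothesis e_phi : forall u v, e u v = zgrid_adj (phi u) (phi v).
Variable j : nat.
Hypothesis column_j_empty : forall v, (phi v).1 != j.

Definition left_of : {set V} := [set v | (phi v).1 < j].

Lemma edge_across_column (u v : V) :
  u \in left_of -> v \notin left_of -> e u v = ~~ odd (phi u).1 && odd (phi v).1.
Proof.
rewrite !inE -leqNgt => uL vR; rewrite e_phi (@zgrid_adj_across _ _ j) // uL.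
by rewrite ltn_neqAle vR andbT eq_sym column_j_empty.
Qed.

Lemma skew_join_even_left :
  (forall v, (v \in X) = ~~ odd (phi v).1) -> is_skew_join e X left_of.
Proof.
move=> hX; split=> u v uA vA; rewrite !hX negbK => pu pv.
  by rewrite edge_across_column // pu pv.
by rewrite e_phi zgrid_adjC -e_phi edge_across_column // pv.
Qed.

Lemma skew_join_odd_right :
  (forall v, (v \in X) = odd (phi v).1) -> is_skew_join e X (~: left_of).
Proof.
move=> hX; split=> u v; rewrite !inE ?negbK => uA vA; rewrite !hX => pu pv.
  by rewrite e_phi zgrid_adjC -e_phi edge_across_column ?inE ?pu ?pv.
by rewrite edge_across_column ?inE ?pu.
Qed.

End EmptyColumn.

Theorem lemma17 (V : finType) (e : rel V) (X : {set V})
  (a b : nat) (phi : V -> nat * nat) :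
  1 <= a -> 1 <= b ->
  bichain e X -> canonically_prime e X ->
  zgrid_embedding e a b phi ->
  forall i k j, used_column phi i -> used_column phi k -> i <= j <= k ->
    used_column phi j.
Proof.
move=> _ _ [bip _] prime [_ [_ e_phi]] i k j [vi <-] [vk <-] /andP[hij hjk].
case: (boolP [exists v, (phi v).1 == j]) => [/existsP[v /eqP]|]; first by exists v.
rewrite negb_exists => /forallP empty_j; exfalso.
have nL : left_of phi j != set0.
  by apply/set0Pn; exists vi; rewrite inE ltn_neqAle hij empty_j.
have nR : ~: left_of phi j != set0.
  by apply/set0Pn; exists vk; rewrite !inE -leqNgt.
have parity : forall u v, e u v -> odd (phi u).1 != odd (phi v).1.
  by move=> u v; rewrite e_phi; exact: zgrid_adj_odd.
have /= [hX|hX] := canonically_prime_part_colouring bip prime parity.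
  have nR' : ~: ~: left_of phi j != set0 by rewrite setCK.
  have [_ [_ []]] := prime _ nR nR'.
  exact (skew_join_odd_right e_phi empty_j hX).
have [_ [_ []]] := prime _ nL nR.
exact (skew_join_even_left e_phi empty_j hX).
Qed.
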